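(* Let $q=4$, $k\ge1$, $S_{2k}=x+x^q+\cdots+x^{q^{2k-1}}\in\mathbb{F}_2[x]$, and $g(x)=x+S_{2k}(x)^{q^{2k}}+S_{2k}(x)^{q^k+3}$. Let $c\in\mathbb{F}_{q^{3k}}$ and $a=c+c^{q^k}$. Then for every $x\in\mathbb{F}_{q^{3k}}$, \[ \mathrm{Tr}\bigl(a\,g(x)\bigr)=\mathrm{Tr}\bigl(c\,S_{2k}(x)^{1+2q^k+q^{2k}}\bigr), \] where $\mathrm{Tr}=\mathrm{Tr}_{q^{3k}/2}$ is the absolute trace of $\mathbb{F}_{q^{3k}}$ to $\mathbb{F}_2$.
   Context: $\mathbb{F}_m$ denotes the finite field with $m$ elements. $\mathrm{Tr}_{q^{3k}/2}(z)=\sum_{i=0}^{6k-1}z^{2^i}$ for $z\in\mathbb{F}_{4^{3k}}$. *)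

From HB Require Import structures.
From mathcomp Require Import all_boot all_order all_algebra all_field.
Set Implicit Arguments. Unset Strict Implicit. Unset Printing Implicit Defensive.
Import GRing.Theory.
Local Open Scope ring_scope.

Definition S2k (F : finFieldType) (k : nat) (x : F) : F :=
  \sum_(i < 2 * k) x ^+ (4 ^ i)%N.

Definition gpoly (F : finFieldType) (k : nat) (x : F) : F :=
  x + S2k k x ^+ (4 ^ (2 * k))%N + S2k k x ^+ (4 ^ k + 3)%N.

Definition Tr (F : finFieldType) (k : nat) (z : F) : F :=
  \sum_(i < 6 * k) z ^+ (2 ^ i)%N.

From HB Require Import structures.
From mathcomp Require Import all_boot all_order all_algebra all_field.
From mathcomp Require Import ring.
Set Implicit Arguments.
Unset Strict Implicit.
Unset Printing Implicit Defensive.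
Import GRing.Theory.
Local Open Scope ring_scope.

(* Let F be the field with 4^(3k) elements, Q = 4^k, and write S = S_{2k}(x).
   The map z |-> z^Q generates Gal(F/F_4), so z^(Q^3) = z, and the absolute
   trace Tr is additive and invariant under z |-> z^2 (hence under z |-> z^Q).

   1. In characteristic 2, z |-> z^(2^m) is additive; this gives additivity
      and Frobenius invariance of Tr, and the adjoint relation
      Tr(c^Q y) = Tr((c^Q y)^(Q^2)) = Tr(c y^(Q^2)).
   2. Splitting S = T + T^Q with T = x + x^4 + ... + x^(4^(k-1)) gives
      S^(Q^2) = S + S^Q, and telescoping gives S^4 + S = x + x^(Q^2).
   3. From these two relations, with s = S and t = S^Q, a computation in
      characteristic 2 yields g(x) + g(x)^(Q^2) = s^2 t^2 + s t^3 = S^(1+2Q+Q^2).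
   The theorem follows: Tr(a g) = Tr(c g) + Tr(c^Q g) = Tr(c (g + g^(Q^2))). *)

Section CharacteristicTwo.

Variable R : comNzRingType.
Hypothesis R_pchar2 : 2 \in [pchar R].

Lemma expr2nD (m : nat) (y z : R) :
  (y + z) ^+ (2 ^ m)%N = y ^+ (2 ^ m)%N + z ^+ (2 ^ m)%N.
Proof.
apply: exprDn_pchar; rewrite pnatX orbC.
by case: eqP => //= _; rewrite (eq_pnat _ (pcharf_eq R_pchar2)) pnat_id.
Qed.

Lemma expr4nD (m : nat) (y z : R) :
  (y + z) ^+ (4 ^ m)%N = y ^+ (4 ^ m)%N + z ^+ (4 ^ m)%N.
Proof. by rewrite -[4%N]/(2 ^ 2)%N -expnM expr2nD. Qed.

Lemma expr4n_sum (m n : nat) (f : 'I_n -> R) :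
  (\sum_(i < n) f i) ^+ (4 ^ m)%N = \sum_(i < n) f i ^+ (4 ^ m)%N.
Proof.
apply: (big_morph (fun y : R => y ^+ (4 ^ m)%N) (expr4nD m)).
by rewrite expr0n expn_eq0.
Qed.

Lemma conj_sum_telescope (n : nat) (x : R) :
  (\sum_(i < n) x ^+ (4 ^ i)%N) ^+ 4 + \sum_(i < n) x ^+ (4 ^ i)%N =
  x + x ^+ (4 ^ n)%N.
Proof.
have frob4 : forall y z : R, (y + z) ^+ 4 = y ^+ 4 + z ^+ 4 := expr4nD 1.
elim: n => [|n IHn].
  by rewrite !big_ord0 exprS mul0r addr0 expn0 expr1 addrr_pchar2.
rewrite big_ord_recr /= frob4 addrACA IHn -exprM -expnSr addrACA.
by rewrite addrr_pchar2 // addr0.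
Qed.

(* The characteristic-2 polynomial identity behind the theorem, with
   x' = x^(Q^2), s = S and t = S^Q (see gpoly_frob2_sum). *)
Lemma char2_key_identity (x s t : R) :
  (x + (s + t) + t * s ^+ 3) + ((s ^+ 4 + s + x) + (s + t + s) + s * (s + t) ^+ 3) =
  s * t ^+ 2 * (s + t).
Proof.
transitivity (s * t ^+ 2 * (s + t) +
  2%:R * (x + 2%:R * s + t + s ^+ 4 + 2%:R * s ^+ 3 * t + s ^+ 2 * t ^+ 2)).
  by ring.
by rewrite (pcharf0 R_pchar2) mul0r addr0.
Qed.

End CharacteristicTwo.

Section FieldOfOrder4Cubed.

Variables (F : finFieldType) (k : nat).
Hypothesis F_card : #|F| = (4 ^ (3 * k))%N.

Lemma F_card2 : #|F| = (2 ^ (6 * k))%N.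
Proof. by rewrite F_card -[4%N]/(2 ^ 2)%N -expnM mulnA. Qed.

Lemma F_pchar2 : 2 \in [pchar F].
Proof. by apply: (card_finPcharP (n := (6 * k)%N)); first exact: F_card2. Qed.

Lemma expr_cube_frob (z : F) : z ^+ (4 ^ (3 * k))%N = z.
Proof. by rewrite -F_card expf_card. Qed.

Lemma TrD (y z : F) : Tr k (y + z) = Tr k y + Tr k z.
Proof.
by rewrite /Tr -big_split; apply: eq_bigr => i _; exact: expr2nD F_pchar2 _ _ _.
Qed.

(* Squaring permutes the conjugates z^(2^i), i < 6k, cyclically. *)
Lemma Tr_sqr (z : F) : Tr k (z ^+ 2) = Tr k z.
Proof.
have z_fix : z ^+ (2 ^ (6 * k))%N = z by rewrite -F_card2 expf_card.
rewrite /Tr; move: z_fix; case: (6 * k)%N => [|n] z_fix; first by rewrite !big_ord0.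
rewrite big_ord_recr big_ord_recl /= -exprM -expnS z_fix expn0 expr1 addrC.
by congr (_ + _); apply: eq_bigr => i _; rewrite -exprM -expnS.
Qed.

Lemma Tr_expr4n (m : nat) (z : F) : Tr k (z ^+ (4 ^ m)%N) = Tr k z.
Proof.
have sqr_sqr : forall y : F, y ^+ 4 = (y ^+ 2) ^+ 2 by move=> y; rewrite -exprM.
elim: m => [|m IHm]; first by rewrite expr1.
by rewrite expnSr exprM sqr_sqr !Tr_sqr.
Qed.

Lemma Tr_frob_adjoint (c y : F) :
  Tr k (c ^+ (4 ^ k)%N * y) = Tr k (c * y ^+ (4 ^ (2 * k))%N).
Proof.
by rewrite -(Tr_expr4n (2 * k)) exprMn -exprM -expnD -mulSn expr_cube_frob.
Qed.

Lemma S2k_split (x : F) :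
  S2k k x = \sum_(i < k) x ^+ (4 ^ i)%N + (\sum_(i < k) x ^+ (4 ^ i)%N) ^+ (4 ^ k)%N.
Proof.
rewrite /S2k mul2n -addnn big_split_ord /= (expr4n_sum F_pchar2); congr (_ + _).
by apply: eq_bigr => i _; rewrite -exprM -expnD addnC.
Qed.

Lemma S2k_frob2 (x : F) :
  S2k k x ^+ (4 ^ (2 * k))%N = S2k k x + S2k k x ^+ (4 ^ k)%N.
Proof.
have F2 := F_pchar2.
rewrite S2k_split !expr4nD // -!exprM -!expnD -mulSn addnn -mul2n expr_cube_frob.
set T := \sum_(i < k) _.
by rewrite addrC [RHS]addrA -(addrA T) addrr_pchar2 // addr0.
Qed.

Lemma gpoly_frob2_sum (x : F) :
  gpoly k x + gpoly k x ^+ (4 ^ (2 * k))%N =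
  S2k k x ^+ (1 + 2 * 4 ^ k + 4 ^ (2 * k))%N.
Proof.
have F2 := F_pchar2; have S_frob2 := S2k_frob2 x.
have t_frob2 : (S2k k x ^+ (4 ^ k)%N) ^+ (4 ^ (2 * k))%N = S2k k x.
  by rewrite -exprM -expnD -mulSn expr_cube_frob.
have x_frob2 : x ^+ (4 ^ (2 * k))%N = S2k k x ^+ 4 + S2k k x + x.
  have tele : S2k k x ^+ 4 + S2k k x = x + x ^+ (4 ^ (2 * k))%N :=
    conj_sum_telescope F2 (2 * k) x.
  by rewrite tele addrAC addrr_pchar2 // add0r.
have gE : gpoly k x = x + (S2k k x + S2k k x ^+ (4 ^ k)%N) +
    S2k k x ^+ (4 ^ k)%N * S2k k x ^+ 3.
  by rewrite /gpoly S_frob2 exprD.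
have gE2 : gpoly k x ^+ (4 ^ (2 * k))%N = x ^+ (4 ^ (2 * k))%N +
    (S2k k x + S2k k x ^+ (4 ^ k)%N + S2k k x) +
    S2k k x * (S2k k x + S2k k x ^+ (4 ^ k)%N) ^+ 3.
  by rewrite gE !expr4nD // exprMn !t_frob2 exprAC S_frob2.
have SE : S2k k x ^+ (1 + 2 * 4 ^ k + 4 ^ (2 * k))%N =
    S2k k x * (S2k k x ^+ (4 ^ k)%N) ^+ 2 * (S2k k x + S2k k x ^+ (4 ^ k)%N).
  by rewrite exprD (exprD _ 1%N) expr1 (mulnC 2%N (4 ^ k)%N) exprM S_frob2.
by rewrite gE2 gE SE x_frob2 char2_key_identity.
Qed.

End FieldOfOrder4Cubed.

Theorem mainTheorem5 (k : nat) (hk : (1 <= k)%N)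
  (F : finFieldType) (hF : #|F| = (4 ^ (3 * k))%N) (c : F) :
  let a := c + c ^+ (4 ^ k)%N in
  forall x : F,
    Tr k (a * gpoly k x) = Tr k (c * S2k k x ^+ (1 + 2 * 4 ^ k + 4 ^ (2 * k))%N).
Proof.
move=> a x; rewrite /a mulrDl TrD // Tr_frob_adjoint // -TrD // -mulrDr.
by rewrite gpoly_frob2_sum.
Qed.
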